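(* Let $a\ge k\ge1$ be integers. For each $\lambda\in\mathrm{SPar}_{a,k}$ let $g_\lambda\in\mathbb Z[y_{k+1},\dots,y_a]$ be any polynomial of the form $$g_\lambda=e_{\bar\lambda-\rho_k}(y_{k+1},\dots,y_a)+\sum_{\nu}d_{\lambda,\nu}\,e_\nu(y_{k+1},\dots,y_a),$$ a finite sum over partitions $\nu$ with $|\nu|=|\bar\lambda-\rho_k|$ and $\nu\triangleright\bar\lambda-\rho_k$, with $d_{\lambda,\nu}\in\mathbb Z$. Then the family $\big(g_\lambda\cdot e_\mu(y_1,\dots,y_a)\big)_{(\lambda,\mu)\in\mathrm{SPar}_{a,k}\times\mathrm{Par}_a}$ is linearly independent over $\mathbb Z$ in $\mathbb Z[y_1,\dots,y_a]$.
   Context: $\mathrm{Par}_a$ is the set of partitions with all parts $\le a$ (including the empty partition); $\mathrm{SPar}_{a,k}$ is the set of strict partitions (pairwise distinct parts) with exactly $k$ parts, all in $\{1,\dots,a\}$. For $\lambda=(\lambda_1>\dots>\lambda_k)\in\mathrm{SPar}_{a,k}$, $\bar\lambda=(\lambda_1-1,\dots,\lambda_k-1)$, $\rho_k=(k-1,k-2,\dots,1,0)$, so $\bar\lambda-\rho_k=(\lambda_1-k,\lambda_2-k+1,\dots,\lambda_k-1)$ is a partition (possibly with zero parts). $e_r$ denotes the $r$-th elementary symmetric polynomial in the indicated variables ($e_0=1$, $e_r=0$ if $r<0$ or $r$ exceeds the number of variables), and for a sequence $\nu=(\nu_1,\nu_2,\dots)$, $e_\nu=\prod_i e_{\nu_i}$.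 $\triangleright$ is strict dominance: $\rho\triangleright\sigma$ iff $\rho\neq\sigma$ and $\rho_1+\dots+\rho_i\ge\sigma_1+\dots+\sigma_i$ for all $i$ (partitions of equal size, zero parts ignored). *)

From HB Require Import structures.
From mathcomp Require Import all_boot all_order all_algebra.
From mathcomp Require Import mpoly.
Set Implicit Arguments. Unset Strict Implicit. Unset Printing Implicit Defensive.
Import Order.TTheory GRing.Theory Num.Theory.
Local Open Scope ring_scope.

(* Variables y_1, ..., y_a are 'X_i for i : 'I_a (y_{j} = 'X_(j-1)). *)

Definition esub (a : nat) (S : {set 'I_a}) (r : nat) : {mpoly int[a]} :=
  \sum_(h : {set 'I_a} | (h \subset S) && (#|h| == r)%N) \prod_(i in h) 'X_i.

Definition esubseq (a : nat) (S : {set 'I_a}) (nu : seq nat) : {mpoly int[a]} :=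
  \prod_(r <- nu) esub S r.

Definition allvars (a : nat) : {set 'I_a} := [set: 'I_a].
Definition tailvars (a k : nat) : {set 'I_a} := [set i : 'I_a | (k <= i)%N].

Definition is_partition (p : seq nat) : bool :=
  sorted geq p && all (fun x => 0 < x)%N p.

Definition in_Par (a : nat) (p : seq nat) : bool :=
  is_partition p && all (fun x => x <= a)%N p.

Definition in_SPar (a k : nat) (l : seq nat) : bool :=
  sorted (fun x y => y < x)%N l && (size l == k) &&
  all (fun x => (0 < x) && (x <= a))%N l.

(* bar(lambda) - rho_k = (lambda_1 - k, lambda_2 - k + 1, ..., lambda_k - 1) *)
Definition lam_shift (k : nat) (l : seq nat) : seq nat :=
  [seq (nth 0 l i - (k - i))%N | i <- iota 0 k].

Definition strip0 (p : seq nat) : seq nat := [seq x <- p | (0 < x)%N].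

Definition sdominates (rho sigma : seq nat) : bool :=
  (rho != sigma) && (sumn rho == sumn sigma) &&
  [forall i : 'I_(size rho + size sigma).+1,
     (sumn (take i sigma) <= sumn (take i rho))%N].

(* Put f_l := \sum_mu c(l, mu) e_mu(y). These are symmetric, so applying a
   permutation of the variables to \sum_l g_l f_l = 0 replaces y_(k+1), ..., y_a
   in every g_l by the complement of an arbitrary k-subset u of the variables.
   Expanding g_l in the products e_t(S), t a multiset of k parts <= a - k, these
   relations read \sum_t e_t(compl u) h_t = 0 with h_t = \sum_l U_(t,l) f_l.
   The square matrix (e_t(compl u))_(u,t) is nonsingular, so every h_t vanishes.
   Since l |-> bar l - rho_k is injective and the lower terms of g_l strictly
   dominate, U is unitriangular with respect to a weight increasing along
   dominance, so every f_l vanishes. Finally the e_mu(y), mu in Par_a, are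
   linearly independent by the fundamental theorem of symmetric polynomials. *)

From HB Require Import structures.
From mathcomp Require Import all_boot all_order all_algebra.
From mathcomp Require Import fingroup perm mpoly zify.
Import Order.TTheory GRing.Theory Num.Theory.
Local Open Scope ring_scope.

Section ElementarySymmetric.
Variables (a : nat) (S : {set 'I_a}).

Lemma esub_eq0 r : (#|S| < r)%N -> esub S r = 0.
Proof.
move=> ltSr; rewrite /esub big_pred0 // => A; apply/negbTE/negP => /andP[sAS /eqP cA].
by move: (subset_leq_card sAS); rewrite cA leqNgt ltSr.
Qed.

Lemma esub0 : esub S 0 = 1.
Proof.
rewrite /esub (big_pred1 set0) ?big_set0 // => A.
by rewrite cards_eq0 andb_idl // => /eqP->; rewrite sub0set.
Qed.

Lemma esubseq_perm l1 l2 : perm_eq l1 l2 -> esubseq S l1 = esubseq S l2.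
Proof. exact: perm_big. Qed.

Lemma esubseq_cat l1 l2 : esubseq S (l1 ++ l2) = esubseq S l1 * esubseq S l2.
Proof. exact: big_cat. Qed.

Lemma esubseq_nseq0 m : esubseq S (nseq m 0%N) = 1.
Proof. by rewrite /esubseq big_nseq esub0 iter_fix // mulr1. Qed.

Lemma esubseq_strip0 l : esubseq S (strip0 l) = esubseq S l.
Proof.
rewrite /esubseq /strip0 big_filter big_mkcond; apply: eq_bigr => -[|r] //=.
by rewrite esub0.
Qed.

Lemma esubseq_eq0 l : ~~ all (fun r => r <= #|S|)%N l -> esubseq S l = 0.
Proof.
case/allPn => r rl; rewrite -ltnNge => ltSr.
by rewrite /esubseq (big_rem r rl) /= esub_eq0 // mul0r.
Qed.

Lemma prod_addX_esub (x : {mpoly int[a]}) :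
  \prod_(s in S) ('X_s + x) = \sum_(j < #|S|.+1) x ^+ (#|S| - j) * esub S j.
Proof.
pose F (i : 'I_a) : {mpoly int[a]} := if i \in S then 'X_i else 0.
pose G (i : 'I_a) : {mpoly int[a]} := if i \in S then x else 1.
have -> : \prod_(s in S) ('X_s + x) = \prod_i (F i + G i).
  rewrite [RHS](bigID (mem S)) /= [X in _ = _ * X]big1 ?mulr1;
    last by move=> i /negbTE iS; rewrite /F /G iS add0r.
  by apply: eq_bigr => i iS; rewrite /F /G iS.
(* Expand over all subsets J of 'I_a; only J \subset S survive, grouped by #|J|. *)
rewrite bigA_distr (bigID (fun J : {set 'I_a} => J \subset S)) /=.
rewrite [X in _ + X]big1 ?addr0; last first.
  move=> J /subsetPn[i iJ iS].
  by rewrite (bigD1 i) //= iJ /F (negbTE iS) mul0r.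
rewrite (partition_big (fun J : {set 'I_a} => inord #|J| : 'I_#|S|.+1) xpredT) //=.
apply: eq_bigr => j _; rewrite /esub big_distrr /=.
apply: eq_big => J.
  by apply/andb_id2l => sJS; rewrite -val_eqE /= inordK // ltnS subset_leq_card.
move=> /andP[sJS /eqP <-]; rewrite inordK ?ltnS ?subset_leq_card //.
rewrite (bigID (mem J)) /= mulrC; congr (_ * _); last first.
  by apply: eq_bigr => i iJ; rewrite iJ /F (subsetP sJS i iJ).
rewrite (bigID (mem S)) /= [X in _ * X]big1 ?mulr1; last first.
  by move=> i /andP[iJ iS]; rewrite (negbTE iJ) /G (negbTE iS).
have -> : (#|S| - #|J| = #|[set i | (i \notin J) && (i \in S)]|)%N.
  rewrite -(cardsID J S) (setIidPr sJS) addKn; apply: eq_card => i.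
  by rewrite !inE andbC.
rewrite -prodr_const; apply: eq_big => i; first by rewrite inE.
by move=> /andP[iJ iS]; rewrite (negbTE iJ) /G iS.
Qed.

End ElementarySymmetric.

Lemma msym_Xi (R : comNzRingType) a (s : 'S_a) (i : 'I_a) :
  msym s ('X_i : {mpoly R[a]}) = 'X_(s i).
Proof. by rewrite /msym mmapX mmap1U. Qed.

Lemma msym_esub a (s : 'S_a) (A : {set 'I_a}) r : msym s (esub A r) = esub (s @: A) r.
Proof.
rewrite /esub raddf_sum /= (reindex (fun h : {set 'I_a} => (s^-1)%g @: h)) /=; last first.
  exists (fun h : {set 'I_a} => s @: h) => h _; rewrite -imset_comp -[RHS]imset_id;
  by apply: eq_imset => x /=; rewrite ?permKV ?permK.
apply: eq_big => h.
  rewrite card_imset; last exact: perm_inj.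
  congr (_ && _); apply/idP/idP => sub.
    apply/subsetP => x xh; rewrite -(permKV s x).
    by apply: imset_f; apply: (subsetP sub); apply: imset_f.
  apply/subsetP => x /imsetP[y yh ->].
  by have /imsetP[z zA ->] := subsetP sub y yh; rewrite permK.
move=> _; rewrite rmorph_prod /= (big_imset _ (in2W (@perm_inj _ _))) /=.
by apply: eq_bigr => i _; rewrite msym_Xi permKV.
Qed.

Lemma msym_esubseq a (s : 'S_a) (A : {set 'I_a}) r :
  msym s (esubseq A r) = esubseq (s @: A) r.
Proof. by rewrite /esubseq rmorph_prod /=; apply: eq_bigr => x _; rewrite msym_esub. Qed.

Lemma exists_perm_imset {T : finType} {A B : {set T}} :
  #|A| = #|B| -> exists s : {perm T}, s @: A = B.
Proof.
move=> cAB.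
pose eA := enum A ++ enum (~: A); pose eB := enum B ++ enum (~: B).
have ueA : uniq eA.
  by rewrite cat_uniq !enum_uniq /= andbT; apply/hasPn => x; rewrite !mem_enum inE => ->.
have ueB : uniq eB.
  by rewrite cat_uniq !enum_uniq /= andbT; apply/hasPn => x; rewrite !mem_enum inE => ->.
have eAx x : x \in eA by rewrite mem_cat !mem_enum inE orbN.
have szAB : size eA = size eB by rewrite !size_cat -!cardE !cardsC.
pose f x := nth x eB (index x eA).
have f_inj : injective f.
  move=> x y; rewrite /f (set_nth_default y) ?(nth_uniq y) -?szAB ?index_mem //.
  move/eqP; rewrite nth_uniq -?szAB ?index_mem // => /eqP e.
  by rewrite -(nth_index x (eAx x)) e nth_index.
exists (perm f_inj).
apply/eqP; rewrite eqEcard card_imset ?cAB ?leqnn ?andbT; last exact: perm_inj.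
apply/subsetP => y /imsetP[x xA ->]; rewrite permE /f.
have xe : x \in enum A by rewrite mem_enum.
rewrite /eA index_cat xe /eB nth_cat -cardE -cAB cardE index_mem xe.
by rewrite -(mem_enum B); apply: mem_nth; rewrite -cardE -cAB cardE index_mem.
Qed.

Definition lt_tuples a k := [set u : k.-tuple 'I_a | sorted ltn (map val u)].
Definition le_tuples n k := [set t : k.-tuple 'I_n.+1 | sorted leq (map val t)].
Definition tuple_compl a k (u : k.-tuple 'I_a) : {set 'I_a} := ~: [set i in u].
Arguments tuple_compl {a k}.

Definition ord_leq n : rel 'I_n := fun x y => (x <= y)%N.

Definition sort_codom n k (phi : {ffun 'I_k -> 'I_n.+1}) : k.-tuple 'I_n.+1 :=
  insubd [tuple of nseq k ord0] (sort (@ord_leq n.+1) (codom phi)).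
Arguments sort_codom {n k}.

Lemma sort_codomE n k (phi : {ffun 'I_k -> 'I_n.+1}) :
  val (sort_codom phi) = sort (@ord_leq n.+1) (codom phi).
Proof. by rewrite val_insubd size_sort size_codom card_ord eqxx. Qed.

Lemma sort_codom_le n k (phi : {ffun 'I_k -> 'I_n.+1}) : sort_codom phi \in le_tuples n k.
Proof.
by rewrite inE sort_codomE sorted_map; apply: sort_sorted => x y; apply: leq_total.
Qed.

Lemma esubseq_sort_codom a n k (S : {set 'I_a}) (phi : {ffun 'I_k -> 'I_n.+1}) :
  esubseq S (map val (sort_codom phi)) = \prod_(q < k) esub S (phi q).
Proof.
rewrite sort_codomE (@esubseq_perm _ _ _ _ (perm_map _ (permEl (perm_sort _ _)))).
by rewrite /esubseq codomE -map_comp big_map big_enum.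
Qed.

Lemma card_lt_tuple a k (u : k.-tuple 'I_a) : u \in lt_tuples a k -> #|[set i in u]| = k.
Proof.
rewrite inE => su; rewrite cardsE (card_uniqP _) ?size_tuple //.
by rewrite -(map_inj_uniq val_inj); apply: (sorted_uniq ltn_trans ltnn).
Qed.

Lemma card_tuple_compl a k (u : k.-tuple 'I_a) :
  u \in lt_tuples a k -> #|tuple_compl u| = (a - k)%N.
Proof. by move=> uk; rewrite cardsCs setCK card_lt_tuple // card_ord. Qed.

Lemma lt_tuples_inj a k (u1 u2 : k.-tuple 'I_a) : u1 \in lt_tuples a k -> u2 \in lt_tuples a k ->
  [set i in u1] = [set i in u2] -> u1 = u2.
Proof.
rewrite !inE => s1 s2 e; apply/val_inj/(inj_map val_inj).
apply: (irr_sorted_eq ltn_trans ltnn) => // x.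
apply/mapP/mapP => -[y yu ->]; exists y => //.
  by move: yu; rewrite -[y \in u1]in_set e inE.
by move: yu; rewrite -[y \in u2]in_set -e inE.
Qed.

Lemma XsubX_neq0 a (i j : 'I_a) : i != j -> ('X_i - 'X_j : {mpoly int[a]}) != 0.
Proof.
move=> ne; apply/eqP => /(congr1 (mcoeff U_(i)%MM)).
by rewrite mcoeffB !mcoeffX eqxx eq_mnm1 eq_sym (negbTE ne) subr0 mcoeff0.
Qed.

Definition vieta_coef a k n (u : k.-tuple 'I_a) (t : k.-tuple 'I_n.+1) : {mpoly int[a]} :=
  \sum_(phi : {ffun 'I_k -> 'I_n.+1} | sort_codom phi == t)
     \prod_(q < k) (- 'X_(tnth u q)) ^+ (n - phi q).
Arguments vieta_coef {a k n}.

Lemma prod_XsubX_esubseq {a k n} (u : k.-tuple 'I_a) {S : {set 'I_a}} : #|S| = n ->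
  \prod_(q < k) \prod_(s in S) ('X_s - 'X_(tnth u q)) =
  \sum_(t in le_tuples n k) vieta_coef u t * esubseq S (map val t).
Proof.
move=> cS; under eq_bigr do rewrite prod_addX_esub cS.
rewrite bigA_distr_bigA /=.
rewrite (partition_big sort_codom (mem (le_tuples n k))) /=; last first.
  by move=> phi _; apply: sort_codom_le.
apply: eq_bigr => t _; rewrite /vieta_coef big_distrl /=.
by apply: eq_bigr => phi /eqP <-; rewrite big_split /= esubseq_sort_codom.
Qed.

(* The square matrix [(e_t(compl u))_(u, t)] is nonsingular: multiplying it by
   [(vieta_coef u' t)_(u', t)] gives [prod_q prod_(s \notin u) (y_s - y_(u'_q))],
   which vanishes off the diagonal since some [u'_q] lies outside [u]. *)
Lemma compl_esubseq_free a k (hka : (k <= a)%N) (h : k.-tuple 'I_(a - k).+1 -> {mpoly int[a]}) :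
  (forall u, u \in lt_tuples a k ->
     \sum_(t in le_tuples (a - k) k) esubseq (tuple_compl u) (map val t) * h t = 0) ->
  forall t, t \in le_tuples (a - k) k -> h t = 0.
Proof.
set n := (a - k)%N => hyp.
have eUB : #|lt_tuples a k| = #|le_tuples n k|.
  by rewrite card_ltn_sorted_tuples card_sorted_tuples subnKC.
pose N := #|le_tuples n k|.
pose col (j : 'I_N) := enum_val j.
pose row (i : 'I_N) := enum_val (cast_ord (esym eUB) i).
have rowP i : row i \in lt_tuples a k by apply: enum_valP.
have row_inj : injective row by move=> i1 i2 /enum_val_inj /cast_ord_inj.
pose E := \matrix_(i < N, j < N) esubseq (tuple_compl (row i)) (map val (col j)).
pose C := \matrix_(i < N, j < N) vieta_coef (row i) (col j).
pose D (i i' : 'I_N) : {mpoly int[a]} :=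
  \prod_(q < k) \prod_(s in tuple_compl (row i')) ('X_s - 'X_(tnth (row i) q)).
have sum_col (F : k.-tuple 'I_n.+1 -> {mpoly int[a]}) :
    \sum_(t in le_tuples n k) F t = \sum_(j < N) F (col j).
  by rewrite big_enum_val.
have CE : C *m E^T = \matrix_(i, i') D i i'.
  apply/matrixP => i i'; rewrite !mxE /D.
  rewrite (prod_XsubX_esubseq (row i) (card_tuple_compl _ _ _ (rowP i'))) sum_col.
  by apply: eq_bigr => j _; rewrite !mxE.
have D_diag : \matrix_(i, i') D i i' = diag_mx (\row_i D i i).
  apply/matrixP => i i'; rewrite !mxE.
  have [<-|ne] := eqVneq i i'; first by rewrite mulr1n.
  rewrite mulr0n.
  have [q qn] : exists q, tnth (row i) q \notin [set x in row i'].
    apply/existsP; rewrite -negb_forall; apply: contra ne => /forallP allq.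
    apply/eqP/row_inj/lt_tuples_inj => //; apply/eqP; rewrite eqEcard.
    rewrite !card_lt_tuple // leqnn andbT; apply/subsetP => x; rewrite !inE => /tnthP[q ->].
    by have := allq q; rewrite inE.
  rewrite /D (bigD1 q) //= (bigD1 (tnth (row i) q)) /=; last by rewrite inE.
  by rewrite subrr !mul0r.
have detE : \det E != 0.
  have : \det (\matrix_(i, i') D i i') != 0.
    rewrite D_diag det_diag; apply/prodf_neq0 => i _; rewrite mxE.
    apply/prodf_neq0 => q _; apply/prodf_neq0 => s; rewrite !inE => sn.
    by apply: XsubX_neq0; apply: contra sn => /eqP ->; apply: mem_tnth.
  by apply: contra; rewrite -CE det_mulmx det_tr => /eqP ->; rewrite mulr0.
pose hv := \col_(j < N) h (col j).
have Eh : E *m hv = 0.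
  apply/matrixP => i j; rewrite !mxE -[RHS](hyp (row i) (rowP i)) sum_col.
  by apply: eq_bigr => j' _; rewrite !mxE.
have : \adj E *m (E *m hv) = 0 by rewrite Eh mulmx0.
rewrite mulmxA mul_adj_mx mul_scalar_mx => /matrixP hz t tB.
have := hz (enum_rank_in tB t) 0; rewrite !mxE /col enum_rankK_in //.
by move/eqP; rewrite mulf_eq0 (negbTE detE) => /eqP.
Qed.

Section BoxTuples.
Local Open Scope nat_scope.

Lemma geq_trans : transitive geq.
Proof. by move=> x y z /= yx zy; apply: leq_trans zy yx. Qed.

Lemma geq_anti : antisymmetric geq.
Proof. by move=> x y /andP[yx xy]; apply/eqP; rewrite eqn_leq; apply/andP. Qed.

Definition in_box n k (r : seq nat) := (size r <= k) && all (fun x => x <= n) r.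

(* [r] padded with zeros to [k] parts and sorted; junk unless [in_box n k r]. *)
Definition box_tuple n k (r : seq nat) : k.-tuple 'I_n.+1 :=
  insubd [tuple of nseq k ord0]
    (sort (@ord_leq n.+1) [seq inord x | x <- r ++ nseq (k - size r) 0]).
Arguments box_tuple {n k}.

Lemma box_tupleE n k r : in_box n k r ->
  map val (@box_tuple n k r) = sort leq (r ++ nseq (k - size r) 0).
Proof.
move=> /andP[sr ar].
rewrite val_insubd size_sort size_map size_cat size_nseq subnKC // eqxx.
rewrite (map_sort (leT := leq)) //; congr sort.
rewrite -map_comp map_id_in // => x; rewrite mem_cat => /orP[xr|].
  by rewrite /= inordK // ltnS; apply: (allP ar).
by case/nseqP => -> _ /=; rewrite inordK.
Qed.

Lemma box_tuple_le n k r : @box_tuple n k r \in le_tuples n k.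
Proof.
rewrite inE /box_tuple val_insubd; case: ifP => _; last first.
  by rewrite /= map_nseq; elim: k => //= -[].
by rewrite sorted_map; apply: sort_sorted => x y; apply: leq_total.
Qed.

Lemma esubseq_box_tuple a n k (S : {set 'I_a}) r : in_box n k r ->
  esubseq S (map val (@box_tuple n k r)) = esubseq S r.
Proof.
move=> rk; rewrite box_tupleE // (@esubseq_perm _ _ _ _ (permEl (perm_sort _ _))).
by rewrite esubseq_cat esubseq_nseq0 GRing.mulr1.
Qed.

Lemma box_tuple_inj {n k r1 r2} : in_box n k r1 -> in_box n k r2 ->
  is_partition r1 -> is_partition r2 -> @box_tuple n k r1 = @box_tuple n k r2 -> r1 = r2.
Proof.
move=> f1 f2 /andP[s1 p1] /andP[s2 p2] e12.
have := congr1 (fun t : k.-tuple 'I_n.+1 => map val t) e12.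
rewrite /= !box_tupleE // => e.
have : perm_eq (r1 ++ nseq (k - size r1) 0) (r2 ++ nseq (k - size r2) 0).
  by rewrite -(perm_sort leq) e perm_sort.
move/(perm_filter (fun x => 0 < x)); rewrite !filter_cat.
have no0 m : [seq x <- nseq m 0 | 0 < x] = [::] by elim: m.
rewrite !no0 !cats0 (all_filterP p1) (all_filterP p2).
exact: (sorted_eq geq_trans geq_anti).
Qed.

End BoxTuples.
Arguments box_tuple {n k}.

Section ShiftedPartition.
Local Open Scope nat_scope.

Definition lam_part k (l : seq nat) := strip0 (lam_shift k l).

Lemma perm_strip0 s : perm_eq s (strip0 s ++ nseq (size s - size (strip0 s)) 0).
Proof.
rewrite perm_sym; apply: (perm_trans _ (permEl (perm_filterC (fun x => 0 < x) s))).
rewrite perm_cat2l.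
have /all_pred1P -> : all (pred1 0) [seq x <- s | predC (fun x => 0 < x) x].
  by apply/allP => x; rewrite mem_filter /= lt0n negbK => /andP[].
by rewrite /strip0 !size_filter -(count_predC (fun x => 0 < x) s) addKn.
Qed.

Lemma strict_sorted_gap (l : seq nat) : sorted (fun x y => y < x) l -> all (fun x => 0 < x) l ->
  forall i, i < size l -> size l - i <= nth 0 l i.
Proof.
elim: l => //= x l IH hs /andP[x0 al] [|i] /=.
  move=> _; rewrite subn0; case: l IH hs al => //= y l IH /andP[yx hs] al.
  by have := IH hs al 0 isT; rewrite subn0 /= => h; apply: leq_ltn_trans h yx.
by rewrite ltnS subSS => il; apply: IH => //; apply: (path_sorted hs).
Qed.

Lemma lam_shift_size k l : size (lam_shift k l) = k.
Proof. by rewrite /lam_shift size_map size_iota. Qed.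

Lemma nth_lam_shift k l i : i < k -> nth 0 (lam_shift k l) i = nth 0 l i - (k - i).
Proof. by move=> ik; rewrite /lam_shift (nth_map 0) ?size_iota // nth_iota. Qed.

Context {a k : nat} {l : seq nat} (lS : in_SPar a k l).

Let l_sorted : sorted (fun x y => y < x) l. Proof. by case/andP: lS => /andP[]. Qed.
Let l_size : size l = k. Proof. by case/andP: lS => /andP[_ /eqP]. Qed.
Let l_range : all (fun x => (0 < x) && (x <= a)) l. Proof. by case/andP: lS. Qed.

Lemma SPar_nth_geq {i} : i < k -> k - i <= nth 0 l i.
Proof.
move=> ik; rewrite -l_size; apply: strict_sorted_gap => //; last by rewrite l_size.
by apply/allP => x /(allP l_range) /andP[].
Qed.

Lemma nth_lam_shiftK {i} : i < k -> nth 0 l i = nth 0 (lam_shift k l) i + (k - i).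
Proof. by move=> ik; rewrite nth_lam_shift // subnK // SPar_nth_geq. Qed.

Lemma lam_shift_sorted : sorted geq (lam_shift k l).
Proof.
apply/(sortedP 0) => i; rewrite lam_shift_size => ik.
rewrite !nth_lam_shift // ?(ltn_trans _ ik) //.
have ltl : nth 0 l i.+1 < nth 0 l i by move/(sortedP 0): l_sorted; apply; rewrite l_size.
have := SPar_nth_geq ik; rewrite /geq /=; lia.
Qed.

Lemma lam_shift_le : all (fun x => x <= a - k) (lam_shift k l).
Proof.
apply/(all_nthP 0) => i; rewrite lam_shift_size => ik.
have k0 : 0 < k by apply: leq_ltn_trans ik.
have := @sorted_leq_nth _ _ geq_trans (fun x => leqnn x) 0 _ lam_shift_sorted 0 i.
rewrite !inE lam_shift_size => /(_ k0 ik (leq0n _)) /= le_i0.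
apply: (leq_trans le_i0); rewrite nth_lam_shift // subn0 leq_sub2r //.
by have /andP[] := allP l_range _ (mem_nth 0 (ltac:(by rewrite l_size) : 0 < size l)).
Qed.

Lemma lam_part_partition : is_partition (lam_part k l).
Proof.
rewrite /is_partition /lam_part /strip0 (sorted_filter geq_trans) ?lam_shift_sorted //=.
by apply/allP => x; rewrite mem_filter => /andP[].
Qed.

Lemma lam_part_in_box : in_box (a - k) k (lam_part k l).
Proof.
apply/andP; split.
  by rewrite size_filter (leq_trans (count_size _ _)) ?lam_shift_size.
by apply/allP => x; rewrite mem_filter => /andP[_ /(allP lam_shift_le)].
Qed.

End ShiftedPartition.

Lemma lam_part_inj {a k l1 l2} : in_SPar a k l1 -> in_SPar a k l2 ->
  lam_part k l1 = lam_part k l2 -> l1 = l2.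
Proof.
move=> l1S l2S e.
have es : lam_shift k l1 = lam_shift k l2.
  apply: (sorted_eq geq_trans geq_anti (lam_shift_sorted l1S) (lam_shift_sorted l2S)).
  rewrite (permPl (perm_strip0 _)) (permPr (perm_strip0 _)).
  by rewrite !lam_shift_size; move: e; rewrite /lam_part => ->.
have s1 : size l1 = k by case/andP: l1S => /andP[_ /eqP].
have s2 : size l2 = k by case/andP: l2S => /andP[_ /eqP].
apply: (eq_from_nth (x0 := 0%N)); first by rewrite s1 s2.
by move=> i; rewrite s1 => ik; rewrite (nth_lam_shiftK l1S ik) (nth_lam_shiftK l2S ik) es.
Qed.

Section Dominance.
Local Open Scope nat_scope.

Definition prefix_pot K (r : seq nat) := \sum_(i < K) sumn (take i r).

Lemma sdominates_prefix {nu sg} : sdominates nu sg ->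
  forall i, sumn (take i sg) <= sumn (take i nu).
Proof.
case/andP => /andP[_ /eqP es] /forallP dom i.
have [le_i|lt_i] := leqP i (size nu + size sg).
  exact: (dom (Ordinal (le_i : i < (size nu + size sg).+1))).
by rewrite !take_oversize ?es //; lia.
Qed.

Lemma sdominates_size {nu sg} : is_partition nu -> sdominates nu sg -> size nu <= size sg.
Proof.
move=> /andP[_ pos_nu] dom; have := sdominates_prefix dom (size sg); rewrite take_size.
case/andP: dom => /andP[_ /eqP <-] _.
rewrite -{1}(cat_take_drop (size sg) nu) sumn_cat => le_tot.
have /natnseq0P tail0 : sumn (drop (size sg) nu) == 0 by apply/eqP; lia.
rewrite -(cat_take_drop (size sg) nu) all_cat in pos_nu.
case/andP: pos_nu => _; rewrite tail0 size_drop.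
by case E: (size nu - size sg) => [|m] //= _; lia.
Qed.

Lemma eq_from_prefix_sums (s1 s2 : seq nat) :
  all (fun x => 0 < x) s1 -> all (fun x => 0 < x) s2 ->
  (forall i, sumn (take i s1) = sumn (take i s2)) -> s1 = s2.
Proof.
elim: s1 s2 => [|x s1 IH] [|y s2] //=.
- by move=> _ /andP[y0 _] /(_ 1) /=; lia.
- by move=> /andP[x0 _] _ /(_ 1) /=; lia.
move=> /andP[x0 a1] /andP[y0 a2] eq_pre.
have exy : x = y by have := eq_pre 1; rewrite /= !take0 /=; lia.
rewrite exy (IH s2) // => i; have := eq_pre i.+1; rewrite /= exy; lia.
Qed.

(* Partial sums of index [>= K > size sg] are the equal totals, so a strict
   dominance shows up in one of the first [K] of them. *)
Lemma sdominates_pot {K nu sg} : is_partition nu -> all (fun x => 0 < x) sg ->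
  size sg < K -> sdominates nu sg -> prefix_pot K sg < prefix_pot K nu.
Proof.
move=> nu_part sg_pos sgK dom.
have le_pre := sdominates_prefix dom.
have [i iK lt_i] : exists2 i, i < K & sumn (take i sg) < sumn (take i nu).
  case: (boolP (has (fun i => sumn (take i sg) < sumn (take i nu)) (iota 0 K))).
    by case/hasP => i; rewrite mem_iota add0n => iK lt_i; exists i.
  move/hasPn => eq_pre; case/andP: (dom) => /andP[/eqP ne /eqP es] _.
  exfalso; apply: ne.
  apply: eq_from_prefix_sums => //; first by case/andP: nu_part.
  move=> i; have [iK|Ki] := ltnP i K.
    apply/eqP; rewrite eqn_leq le_pre andbT leqNgt.
    by apply: eq_pre; rewrite mem_iota add0n.
  have := sdominates_size nu_part dom => le_size.
  by rewrite !take_oversize ?es //; lia.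
rewrite /prefix_pot (bigD1 (Ordinal iK)) //= [X in _ < X](bigD1 (Ordinal iK)) //=.
by rewrite -addSn leq_add // leq_sum.
Qed.

End Dominance.

Lemma unitriangular_eq0 (T : eqType) (R : nzRingType) (V : lmodType R)
    (s : seq T) (U : T -> T -> R) (w : T -> nat) (f : T -> V) :
  uniq s -> (forall x, x \in s -> U x x = 1) ->
  (forall x y, x \in s -> y \in s -> y != x -> U x y != 0 -> (w y < w x)%N) ->
  (forall x, x \in s -> \sum_(y <- s) U x y *: f y = 0) ->
  forall x, x \in s -> f x = 0.
Proof.
move=> us U_diag U_lower U_sum x.
have [m] := ubnP (w x); elim: m => // m IH in x *; rewrite ltnS => wx xs.
have := U_sum x xs; rewrite (bigD1_seq x) //= U_diag // scale1r big1_seq ?addr0 //.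
move=> y /andP[yx ys]; have [->|nz] := eqVneq (U x y) 0; first by rewrite scale0r.
by rewrite IH ?scaler0 // (leq_trans (U_lower x y xs ys yx nz)).
Qed.

Lemma sum_le_tuples_pick (R : nzRingType) (V : lmodType R) n k (F : k.-tuple 'I_n.+1 -> V) t0 :
  t0 \in le_tuples n k -> \sum_(t in le_tuples n k) (t0 == t)%:R *: F t = F t0.
Proof.
move=> t0k; rewrite (bigD1 t0) //= eqxx scale1r big1 ?addr0 // => t /andP[_ ne].
by rewrite eq_sym (negbTE ne) scale0r.
Qed.

Lemma card_tailvars {a k} : (k <= a)%N -> #|tailvars a k| = (a - k)%N.
Proof.
move=> hka.
have compl_tail : ~: tailvars a k = [set widen_ord hka i | i in 'I_k].
  apply/setP => i; rewrite !inE -ltnNge; apply/idP/imsetP => [ik|[j _ ->]].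
    by exists (Ordinal ik) => //; apply: val_inj.
  by rewrite /= ltn_ord.
rewrite cardsCs compl_tail card_imset ?card_ord //.
by move=> x y /(congr1 val) /= /val_inj.
Qed.

Section Cofactors.
Variables (a k : nat) (ns : seq nat -> seq (seq nat)) (d : seq nat -> seq nat -> int).

Definition lower_dominant l :=
  all (fun nu => is_partition nu && sdominates nu (lam_part k l)) (ns l).

(* [g_lambda] of the statement, with its variables taken from [S]. *)
Definition gpoly (S : {set 'I_a}) l : {mpoly int[a]} :=
  esubseq S (lam_shift k l) + \sum_(nu <- ns l) d l nu *: esubseq S nu.

Definition gcoef (t : k.-tuple 'I_(a - k).+1) l : int :=
  (box_tuple (lam_part k l) == t)%:R
  + \sum_(nu <- ns l | in_box (a - k) k nu) (box_tuple nu == t)%:R * d l nu.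

Lemma msym_gpoly (w : 'S_a) (S : {set 'I_a}) l : msym w (gpoly S l) = gpoly (w @: S) l.
Proof.
rewrite /gpoly msymD msym_esubseq raddf_sum /=; congr (_ + _).
by apply: eq_bigr => nu _; rewrite msymZ msym_esubseq.
Qed.

Lemma gpoly_expand (S : {set 'I_a}) l : in_SPar a k l -> lower_dominant l -> #|S| = (a - k)%N ->
  gpoly S l = \sum_(t in le_tuples (a - k) k) gcoef t l *: esubseq S (map val t).
Proof.
move=> lS l_dom cardS; rewrite /gcoef.
under eq_bigr do rewrite scalerDl scaler_suml.
rewrite big_split /= sum_le_tuples_pick ?box_tuple_le //.
rewrite esubseq_box_tuple ?lam_part_in_box // esubseq_strip0; congr (_ + _).
rewrite exchange_big /= [RHS]big_mkcond /=; apply: eq_big_seq => nu nu_ns.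
have /andP[nu_part nu_dom] := allP l_dom nu nu_ns.
case: ifPn => [nu_box|nu_box].
  under eq_bigr do rewrite -scalerA.
  by rewrite sum_le_tuples_pick ?box_tuple_le // esubseq_box_tuple.
rewrite esubseq_eq0 ?scaler0 // cardS; apply: contraNN nu_box => nu_le.
rewrite /in_box nu_le andbT (leq_trans (sdominates_size nu_part nu_dom)) //.
by case/andP: (lam_part_in_box lS).
Qed.

Lemma gcoef_diag l : in_SPar a k l -> lower_dominant l ->
  gcoef (box_tuple (lam_part k l)) l = 1.
Proof.
move=> lS l_dom; rewrite /gcoef eqxx big1_seq ?addr0 // => nu /andP[nu_box nu_ns].
have /andP[nu_part /andP[/andP[nu_ne _] _]] := allP l_dom nu nu_ns.
case: eqP => [e|]; last by rewrite mul0r.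
by move: nu_ne; rewrite (box_tuple_inj nu_box (lam_part_in_box lS) nu_part
  (lam_part_partition lS) e) eqxx.
Qed.

Lemma gcoef_lower l0 l : in_SPar a k l0 -> in_SPar a k l -> lower_dominant l -> l != l0 ->
  gcoef (box_tuple (lam_part k l0)) l != 0 ->
  (prefix_pot k.+1 (lam_part k l) < prefix_pot k.+1 (lam_part k l0))%N.
Proof.
move=> l0S lS l_dom ne; apply: contraTT; rewrite -leqNgt => pot_le.
rewrite negbK /gcoef; apply/eqP; case: eqP => [/box_tuple_inj e|_].
  by move: ne; rewrite (lam_part_inj lS l0S (e (lam_part_in_box lS) (lam_part_in_box l0S)
    (lam_part_partition lS) (lam_part_partition l0S))) eqxx.
rewrite add0r big1_seq // => nu /andP[nu_box nu_ns].
have /andP[nu_part nu_dom] := allP l_dom nu nu_ns.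
case: eqP => [e|]; last by rewrite mul0r.
move: nu_dom; rewrite (box_tuple_inj nu_box (lam_part_in_box l0S) nu_part
  (lam_part_partition l0S) e) => dom.
move: pot_le; rewrite leqNgt (sdominates_pot (lam_part_partition l0S) _ _ dom) //.
  by case/andP: (lam_part_partition lS).
by rewrite ltnS; case/andP: (lam_part_in_box lS).
Qed.

End Cofactors.
Arguments gpoly_expand {a k ns d S l}.
Arguments gcoef_diag {a k ns d l}.
Arguments gcoef_lower {a k ns d l0 l}.

Lemma symmetric_cofactors_eq0 {a k} (hka : (k <= a)%N) ns d (Ls : seq (seq nat))
    (f : seq nat -> {mpoly int[a]}) :
  uniq Ls -> all (in_SPar a k) Ls -> (forall l, l \in Ls -> lower_dominant k ns l) ->
  (forall l (w : 'S_a), msym w (f l) = f l) ->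
  \sum_(l <- Ls) gpoly a k ns d (tailvars a k) l * f l = 0 ->
  forall l, l \in Ls -> f l = 0.
Proof.
move=> uLs /allP LsS Ls_dom f_sym sum0.
pose h t := \sum_(l <- Ls) gcoef a k ns d t l *: f l.
have h0 : forall t, t \in le_tuples (a - k) k -> h t = 0.
  apply: compl_esubseq_free => // u uk.
  have [w tail_u] := exists_perm_imset (etrans (card_tailvars hka)
    (esym (card_tuple_compl _ _ _ uk))).
  transitivity (\sum_(l <- Ls) gpoly a k ns d (tuple_compl u) l * f l).
    under eq_bigr do rewrite big_distrr.
    rewrite exchange_big /= !big_seq; apply: eq_bigr => l lLs.
    rewrite (gpoly_expand (LsS l lLs) (Ls_dom l lLs)) ?card_tuple_compl //.
    by rewrite big_distrl; apply: eq_bigr => t _; rewrite -scalerAr scalerAl.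
  transitivity (msym w (\sum_(l <- Ls) gpoly a k ns d (tailvars a k) l * f l)).
    rewrite raddf_sum -tail_u; apply: eq_bigr => l _.
    by rewrite /= msymM f_sym msym_gpoly.
  by rewrite sum0 raddf0.
apply: (@unitriangular_eq0 _ _ _ _ (fun l0 => gcoef a k ns d (box_tuple (lam_part k l0)))
  (fun l => prefix_pot k.+1 (lam_part k l))) => //.
- by move=> l lLs; apply: gcoef_diag; [apply: LsS | apply: Ls_dom].
- by move=> l0 l l0Ls lLs; apply: gcoef_lower; [apply: LsS | apply: LsS | apply: Ls_dom].
- by move=> l0 _; apply/h0/box_tuple_le.
Qed.

Definition part_mnm a (mu : seq nat) : 'X_{1..a} := [multinom count_mem i.+1 mu | i < a].

Lemma part_mnm_inj {a mu1 mu2} : in_Par a mu1 -> in_Par a mu2 ->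
  part_mnm a mu1 = part_mnm a mu2 -> mu1 = mu2.
Proof.
move=> /andP[/andP[s1 p1] b1] /andP[/andP[s2 p2] b2] e.
apply: (sorted_eq geq_trans geq_anti s1 s2); apply/allP => x _ /=.
have count0 y (s : seq nat) : all (fun x => x != y) s -> count_mem y s = 0%N.
  move=> ny; apply/eqP; rewrite -leqn0 leqNgt -has_count.
  by apply/hasPn => z /(allP ny) /= /negbTE ->.
apply/eqP; case: x => [|x].
  by rewrite !count0 //; apply/allP => z; [move/(allP p2) | move/(allP p1)]; case: z.
have [xa|ax] := ltnP x a.
  by have := congr1 (fun m : 'X_{1..a} => m (Ordinal xa)) e; rewrite /part_mnm !mnmE.
by rewrite !count0 //; apply/allP => z; [move/(allP b2) | move/(allP b1)]; lia.
Qed.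

Lemma prod_count {R : comNzRingType} {a} (F : nat -> R) (mu : seq nat) :
  all (fun x => (0 < x) && (x <= a))%N mu ->
  \prod_(r <- mu) F r = \prod_(i < a) F i.+1 ^+ count_mem i.+1 mu.
Proof.
elim: mu => [|r mu IH] /=.
  by rewrite big_nil big1 // => i _; rewrite expr0.
case/andP => /andP[r0 ra] mu_range; rewrite big_cons IH //.
under [RHS]eq_bigr do rewrite exprD.
rewrite big_split /=; congr (_ * _).
have ra' : (r.-1 < a)%N by lia.
rewrite (bigD1 (Ordinal ra')) //= prednK // eqxx expr1 big1 ?mulr1 // => i ne.
case: (r =P i.+1) => [e|_]; last by rewrite expr0.
by move: ne; rewrite -val_eqE /= e eqxx.
Qed.

Lemma esubseq_allvars_comp a mu : in_Par a mu ->
  'X_[part_mnm a mu] \mPo [tuple mesym a int i.+1 | i < a] = esubseq (allvars a) mu.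
Proof.
move=> /andP[/andP[_ pos] le_a].
rewrite comp_mpolyX /esubseq (prod_count (a := a) (fun r => esub (allvars a) r)); last first.
  by apply/allP => x xm; rewrite (allP pos x xm) (allP le_a x xm).
apply: eq_bigr => i _; rewrite tnth_mktuple /part_mnm mnmE; congr (_ ^+ _).
by rewrite /esub /mesym; apply: eq_bigl => h; rewrite subsetT.
Qed.

Lemma esubseq_allvars_free a (I : eqType) (L : seq I) (mu : I -> seq nat) (c : I -> int) :
  uniq L -> {in L &, injective mu} -> all (fun i => in_Par a (mu i)) L ->
  \sum_(i <- L) c i *: esubseq (allvars a) (mu i) = 0 -> forall i, i \in L -> c i = 0.
Proof.
move=> uL mu_inj /allP L_Par sum0 i iL.
pose t : {mpoly int[a]} := \sum_(j <- L) c j *: 'X_[part_mnm a (mu j)].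
have t0 : t = 0.
  apply: msym_fundamental_un0; rewrite /t raddf_sum /= -[RHS]sum0 !big_seq.
  by apply: eq_bigr => j jL; rewrite comp_mpolyZ esubseq_allvars_comp // L_Par.
have := congr1 (mcoeff (part_mnm a (mu i))) t0; rewrite mcoeff0 /t raddf_sum /=.
rewrite (bigD1_seq i) //= mcoeffZ mcoeffX eqxx mulr1 big1_seq ?addr0 //.
move=> j /andP[ne jL]; rewrite mcoeffZ mcoeffX; case: eqP => [e|]; last by rewrite mulr0.
by move: ne; rewrite (mu_inj j i jL iL (part_mnm_inj (L_Par j jL) (L_Par i iL) e)) eqxx.
Qed.

Lemma esubseq_allvars_fiber_free {a} {T : eqType} {s : seq (T * seq nat)}
    {c : T * seq nat -> int} {x} :
  uniq s -> all (fun p => in_Par a p.2) s ->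
  \sum_(p <- s | p.1 == x) c p *: esubseq (allvars a) p.2 = 0 ->
  forall p, p \in s -> p.1 = x -> c p = 0.
Proof.
move=> us /allP s_Par sum0 p ps px.
apply: (@esubseq_allvars_free a _ [seq q <- s | q.1 == x] snd).
- exact: filter_uniq.
- move=> [x1 y1] [x2 y2]; rewrite !mem_filter /=.
  by move=> /andP[/eqP -> _] /andP[/eqP -> _] ->.
- by apply/allP => q; rewrite mem_filter => /andP[_ /s_Par].
- by rewrite big_filter.
- by rewrite mem_filter px eqxx.
Qed.

Lemma seq_choice {T : eqType} {X : Type} (x0 : X) {P : T -> X -> Prop} {s : seq T} :
  (forall t, t \in s -> exists x, P t x) -> exists F : T -> X, forall t, t \in s -> P t (F t).
Proof.
elim: s => [|t s IH] Ps; first by exists (fun _ => x0).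
have [x Ptx] := Ps t (mem_head _ _).
have [F PF] : exists F : T -> X, forall t', t' \in s -> P t' (F t').
  by apply: IH => t' t's; apply: Ps; rewrite in_cons t's orbT.
exists (fun t' => if t' == t then x else F t') => t'; rewrite in_cons.
by case: eqP => [->|_] //= /PF.
Qed.

Lemma big_undup_fst {T1 T2 : eqType} {V : nmodType} (s : seq (T1 * T2))
    (F : T1 -> T1 * T2 -> V) :
  \sum_(p <- s) F p.1 p = \sum_(x <- undup (map fst s)) \sum_(p <- s | p.1 == x) F x p.
Proof.
under [RHS]eq_bigr do rewrite big_mkcond.
rewrite exchange_big /= !big_seq; apply: eq_bigr => p ps.
rewrite (bigD1_seq p.1) ?undup_uniq ?mem_undup ?map_f //= eqxx big1 ?addr0 // => x ne.
by rewrite eq_sym (negbTE ne).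
Qed.

Lemma msym_esubseq_allvars a (w : 'S_a) mu :
  msym w (esubseq (allvars a) mu) = esubseq (allvars a) mu.
Proof.
rewrite msym_esubseq; congr esubseq; apply/eqP.
by rewrite eqEcard subsetT card_imset ?leqnn //; apply: perm_inj.
Qed.

Theorem mainTheorem13 (a k : nat) (hk1 : (1 <= k)%N) (hka : (k <= a)%N)
  (g : seq nat -> {mpoly int[a]})
  (hg : forall lam, in_SPar a k lam ->
     exists (ns : seq (seq nat)) (d : seq nat -> int),
       [/\ uniq ns,
           all (fun nu => is_partition nu &&
                  sdominates nu (strip0 (lam_shift k lam))) ns &
           g lam = esubseq (tailvars a k) (lam_shift k lam)
                   + \sum_(nu <- ns) d nu *: esubseq (tailvars a k) nu]) :
  forall (s : seq (seq nat * seq nat)) (c : seq nat * seq nat -> int),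
    uniq s ->
    all (fun p => in_SPar a k p.1 && in_Par a p.2) s ->
    \sum_(p <- s) c p *: (g p.1 * esubseq (allvars a) p.2) = 0 ->
    forall p, p \in s -> c p = 0.
Proof.
move=> s c us /allP s_range sum0.
pose Ls := undup (map fst s).
pose f l := \sum_(p <- s | p.1 == l) c p *: esubseq (allvars a) p.2.
have LsS l : l \in Ls -> in_SPar a k l.
  by rewrite mem_undup => /mapP[p ps ->]; case/andP: (s_range p ps).
have /(seq_choice ([::], fun _ => 0)) [nsd nsd_spec] : forall l, l \in Ls ->
    exists x : seq (seq nat) * (seq nat -> int), lower_dominant k (fun _ => x.1) l /\
      g l = gpoly a k (fun _ => x.1) (fun _ => x.2) (tailvars a k) l.
  by move=> l lLs; have [ns [d [_ dom gE]]] := hg l (LsS l lLs); exists (ns, d).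
have f0 : forall l, l \in Ls -> f l = 0.
  apply: (symmetric_cofactors_eq0 hka (fun l => (nsd l).1) (fun l => (nsd l).2)).
  - exact: undup_uniq.
  - by apply/allP.
  - by move=> l lLs; apply: (nsd_spec l lLs).1.
  - move=> l w; rewrite raddf_sum; apply: eq_bigr => p _.
    by rewrite /= msymZ msym_esubseq_allvars.
  rewrite -[RHS]sum0; under [RHS]eq_bigr do rewrite scalerAr.
  rewrite (big_undup_fst _ (fun l p => g l * (c p *: esubseq (allvars a) p.2))) /= !big_seq.
  apply: eq_bigr => l lLs; case: (nsd_spec l lLs) => _ gE.
  by rewrite /gpoly /= in gE *; rewrite -gE big_distrr.
have s_Par : all (fun p => in_Par a p.2) s by apply/allP => p /s_range /andP[].
move=> p ps; have p1Ls : p.1 \in Ls by rewrite mem_undup map_f.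
exact: (esubseq_allvars_fiber_free us s_Par (f0 p.1 p1Ls) p ps).
Qed.
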